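(* Let $\bullet\in\{0,L_p,L,1_p,1\}$, $\mathbf{x}_0\in\mathbb{R}^d$, $\mathbf{A}\in C^\bullet_{\mathbf{x}_0}(\mathbb{R}^d,\mathbb{R}^{m\times n})$, $\mu\in(0,\infty)$ and $\nu\in\mathbb{N}\cup\{0\}$. Define $\lambda:\mathbb{R}^d\to(0,\infty]$ by $\lambda^2(\mathbf{x})=\mu^2/|(\mathbf{A}\mathbf{A}^T)(\mathbf{x})|^\nu$ if $|(\mathbf{A}\mathbf{A}^T)(\mathbf{x})|^\nu>0$ and $\lambda^2(\mathbf{x})=\infty$ otherwise. Then the map $\mathbf{x}\mapsto\mathbf{A}(\mathbf{x})^{*(\lambda(\mathbf{x}))}$ belongs to $C^\bullet_{\mathbf{x}_0}(\mathbb{R}^d,\mathbb{R}^{n\times m})$.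
   Context: $|\cdot|$ denotes the determinant, with $0^0=1$. Damped pseudoinverse: $\mathbf{A}^{*(\lambda)}=\mathbf{A}^T(\mathbf{A}\mathbf{A}^T+\lambda^2\mathbf{I}_m)^+$ for $\lambda<\infty$ and $\mathbf{A}^{*(\infty)}=\mathbf{0}$. Regularity classes: $f\in C^\bullet_{x_0}$ means, respectively, ($0$) continuous at $x_0$; ($L_p$) there are $r>0,L\ge0$ with $\|f(x)-f(x_0)\|\le L\|x-x_0\|$ for $\|x-x_0\|\le r$; ($L$) Lipschitz on a neighborhood of $x_0$; ($1_p$) Fréchet differentiable at $x_0$; ($1$) differentiable on a neighborhood of $x_0$ with derivative continuous at $x_0$. *)

From HB Require Import structures.
From Stdlib Require Import Reals Lra ClassicalEpsilon FunctionalExtensionality.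
From mathcomp Require Import all_boot all_order all_algebra.

Set Implicit Arguments.
Unset Strict Implicit.
Unset Printing Implicit Defensive.

Definition Reqb (x y : R) : bool := if Req_EM_T x y then true else false.

Lemma Reqb_axiom : Equality.axiom Reqb.
Proof. by move=> x y; rewrite /Reqb; case: Req_EM_T => h; constructor. Qed.

HB.instance Definition _ := hasDecEq.Build R Reqb_axiom.

Definition Rfind (P : pred R) (_ : nat) : option R :=
  match excluded_middle_informative (exists x, P x) with
  | left h => Some (proj1_sig (constructive_indefinite_description _ h))
  | right _ => None
  end.

Lemma Rfind_correct P n x : Rfind P n = Some x -> P x.
Proof.
rewrite /Rfind; case: excluded_middle_informative => // h [<-].
exact: proj2_sig (constructive_indefinite_description _ h).
Qed.

Lemma Rfind_complete (P : pred R) : (exists x, P x) -> exists n, Rfind P n.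
Proof.
move=> h; exists 0%N; rewrite /Rfind; case: excluded_middle_informative => //.
Qed.

Lemma Rfind_ext (P Q : pred R) : P =1 Q -> Rfind P =1 Rfind Q.
Proof.
move=> hPQ; have -> : P = Q by apply: functional_extensionality.
by [].
Qed.

HB.instance Definition _ := hasChoice.Build R Rfind_correct Rfind_complete Rfind_ext.

Lemma R_addrA : associative Rplus. Proof. by move=> x y z; rewrite Rplus_assoc. Qed.
Lemma R_addrC : commutative Rplus. Proof. exact: Rplus_comm. Qed.
Lemma R_add0r : left_id (IZR 0) Rplus. Proof. exact: Rplus_0_l. Qed.
Lemma R_addNr : left_inverse (IZR 0) Ropp Rplus. Proof. exact: Rplus_opp_l. Qed.

HB.instance Definition _ := GRing.isZmodule.Build R R_addrA R_addrC R_add0r R_addNr.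

Lemma R_mulrA : associative Rmult. Proof. by move=> x y z; rewrite Rmult_assoc. Qed.
Lemma R_mulrC : commutative Rmult. Proof. exact: Rmult_comm. Qed.
Lemma R_mul1r : left_id (IZR 1) Rmult. Proof. exact: Rmult_1_l. Qed.
Lemma R_mulrDl : left_distributive Rmult Rplus.
Proof. by move=> x y z; rewrite Rmult_plus_distr_r. Qed.
Lemma R_oner_neq0 : (IZR 1) != (IZR 0).
Proof. by apply/eqP; exact: R1_neq_R0. Qed.

HB.instance Definition _ :=
  GRing.Zmodule_isComNzRing.Build R R_mulrA R_mulrC R_mul1r R_mulrDl R_oner_neq0.

Lemma R_mulVf (x : R) : x != IZR 0 -> Rmult (Rinv x) x = IZR 1.
Proof. by move/eqP=> h; rewrite Rinv_l. Qed.
Lemma R_invr0 : Rinv (IZR 0) = IZR 0. Proof. exact: Rinv_0. Qed.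

HB.instance Definition _ := GRing.ComNzRing_isField.Build R R_mulVf R_invr0.

Import GRing.Theory.
Local Open Scope ring_scope.

Definition mnorm (p q : nat) (M : 'M[R]_(p, q)) : R :=
  sqrt (\sum_(i < p) \sum_(j < q) (M i j * M i j))%R.

Inductive reg_class : Type := Reg0 | RegLp | RegL | Reg1p | Reg1.

Definition is_linear_map (d p q : nat) (D : 'cV[R]_d -> 'M[R]_(p, q)) : Prop :=
  forall (a : R) (u v : 'cV[R]_d), D (a *: u + v)%R = (a *: D u + D v)%R.

Definition frechet_at (d p q : nat) (f : 'cV[R]_d -> 'M[R]_(p, q))
  (x : 'cV[R]_d) (D : 'cV[R]_d -> 'M[R]_(p, q)) : Prop :=
  is_linear_map D /\
  forall eps : R, Rlt 0 eps -> exists delta : R, Rlt 0 delta /\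
    forall y : 'cV[R]_d, Rlt (mnorm (y - x)%R) delta ->
      Rle (mnorm (f y - f x - D (y - x))%R) (Rmult eps (mnorm (y - x)%R)).

Definition regular (b : reg_class) (d p q : nat)
  (f : 'cV[R]_d -> 'M[R]_(p, q)) (x0 : 'cV[R]_d) : Prop :=
  match b with
  | Reg0 =>
      forall eps : R, Rlt 0 eps -> exists delta : R, Rlt 0 delta /\
        forall x : 'cV[R]_d, Rlt (mnorm (x - x0)%R) delta ->
          Rlt (mnorm (f x - f x0)%R) eps
  | RegLp =>
      exists r L : R, Rlt 0 r /\ Rle 0 L /\
        forall x : 'cV[R]_d, Rle (mnorm (x - x0)%R) r ->
          Rle (mnorm (f x - f x0)%R) (Rmult L (mnorm (x - x0)%R))
  | RegL =>
      exists r L : R, Rlt 0 r /\ Rle 0 L /\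
        forall x y : 'cV[R]_d, Rlt (mnorm (x - x0)%R) r -> Rlt (mnorm (y - x0)%R) r ->
          Rle (mnorm (f x - f y)%R) (Rmult L (mnorm (x - y)%R))
  | Reg1p =>
      exists D, frechet_at f x0 D
  | Reg1 =>
      exists (r : R) (Df : 'cV[R]_d -> 'cV[R]_d -> 'M[R]_(p, q)), Rlt 0 r /\
        (forall x : 'cV[R]_d, Rlt (mnorm (x - x0)%R) r -> frechet_at f x (Df x)) /\
        (* continuity of x |-> Df x at x0 in operator norm *)
        (forall eps : R, Rlt 0 eps -> exists delta : R, Rlt 0 delta /\
           forall x : 'cV[R]_d, Rlt (mnorm (x - x0)%R) delta ->
             forall h : 'cV[R]_d,
               Rle (mnorm (Df x h - Df x0 h)%R) (Rmult eps (mnorm h)))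
  end.

Definition penrose (p q : nat) (M : 'M[R]_(p, q)) (X : 'M[R]_(q, p)) : Prop :=
  [/\ (M *m X *m M = M)%R, (X *m M *m X = X)%R,
      (M *m X)^T = (M *m X)%R & (X *m M)^T = (X *m M)%R].

(* M^+ : the (unique) matrix satisfying the four Penrose equations *)
Definition pinv (p q : nat) (M : 'M[R]_(p, q)) : 'M[R]_(q, p) :=
  epsilon (inhabits 0%R) (penrose M).

(* A damping parameter lambda in (0, +oo]: Some l is the finite value l,
   None is +oo. *)
Definition damped_pinv (m n : nat) (A : 'M[R]_(m, n)) (lam : option R)
  : 'M[R]_(n, m) :=
  match lam with
  | Some l => (A^T *m pinv (A *m A^T + (Rmult l l)%:M))%R
  | None => 0%R
  end.

(* lambda(x) with lambda^2(x) = mu^2 / |A A^T (x)|^nu if |A A^T(x)|^nu > 0,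
   and +oo otherwise; note x ^+ 0 = 1, matching 0^0 = 1. *)
Definition lam_fun (d m n : nat) (mu : R) (nu : nat)
  (A : 'cV[R]_d -> 'M[R]_(m, n)) (x : 'cV[R]_d) : option R :=
  let D := ((\det (A x *m (A x)^T)) ^+ nu)%R in
  if Rlt_dec 0 D then Some (sqrt (Rdiv (Rmult mu mu) D)) else None.

From HB Require Import structures.
From Stdlib Require Import Reals Lra ClassicalEpsilon FunctionalExtensionality Classical.
From mathcomp Require Import all_boot all_order all_algebra.

(* Write D(x) = det(A A^T)(x)^nu and M(x) = D(x) A A^T(x) + mu^2 I.  Since a Gram
   determinant is nonnegative, D >= 0, so M(x) is positive definite, hence
   invertible, and the damped pseudoinverse has the closed form
        A(x)^{*(lambda(x))} = D(x) A(x)^T adj(M(x)) / det(M(x))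
   (if D > 0, lambda^2 = mu^2 / D and (A A^T + lambda^2 I)^+ = D M^{-1};
   if D = 0 both sides vanish).  The right-hand side is built from the entries
   of A by sums, products and one reciprocal of a function that does not vanish
   at x0; the proof therefore reduces to closure properties of the classes C^b. *)

Set Implicit Arguments.
Unset Strict Implicit.
Unset Printing Implicit Defensive.
Import GRing.Theory.
Local Open Scope R_scope.

(* The ring operations of the MathComp structure on R are definitionally those
   of Stdlib; [to_R] rewrites them back so that [lra], [nra] and [field] apply. *)
Lemma addRE (x y : R) : (x + y)%R = x + y. Proof. by []. Qed.
Lemma mulRE (x y : R) : (x * y)%R = x * y. Proof. by []. Qed.
Lemma oppRE (x : R) : (- x)%R = - x. Proof. by []. Qed.
Lemma subRE (x y : R) : (x - y)%R = x - y. Proof. by []. Qed.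
Lemma invRE (x : R) : (x^-1)%R = / x. Proof. by []. Qed.
Lemma zeroRE : (0%R : R) = 0. Proof. by []. Qed.
Lemma oneRE : (1%R : R) = 1. Proof. by []. Qed.

Ltac to_R :=
  rewrite ?subRE ?addRE ?mulRE ?oppRE ?invRE ?zeroRE ?oneRE;
  repeat match goal with |- context [@fun_of_matrix ?T ?p ?q ?M ?i ?j] =>
    progress change (@fun_of_matrix T p q M i j) with (@fun_of_matrix R p q M i j) end;
  try match goal with |- @eq _ ?a ?b => change (@eq R a b) end.

Section RealSums.
Variable I : Type.
Implicit Types (r : seq I) (F G : I -> R).

Lemma sum_ge0 r F : (forall i, 0 <= F i) -> 0 <= (\sum_(i <- r) F i)%R.
Proof.
move=> F_ge0; apply: (big_ind (fun x => 0 <= x)) => //; first (to_R; lra).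
by move=> x y hx hy; to_R; lra.
Qed.

Lemma sum_le r F G : (forall i, F i <= G i) -> (\sum_(i <- r) F i)%R <= (\sum_(i <- r) G i)%R.
Proof.
move=> FG; apply: (big_ind2 (fun x y => x <= y)) => //; first (to_R; lra).
by move=> x y z w h1 h2; to_R; lra.
Qed.

Lemma abs_sum_le r F : Rabs (\sum_(i <- r) F i)%R <= (\sum_(i <- r) Rabs (F i))%R.
Proof.
apply: (big_ind2 (fun x y => Rabs x <= y)) => //; first (to_R; rewrite Rabs_R0; lra).
  by move=> x y z w h1 h2; to_R; have := Rabs_triang x z; lra.
by move=> i _; lra.
Qed.

Lemma sum_le_const r F c : (forall i, F i <= c) -> (\sum_(i <- r) F i)%R <= INR (size r) * c.
Proof.
move=> Fc; elim: r => [|a r IH]; first by rewrite big_nil /=; to_R; lra.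
rewrite big_cons [size _]/= S_INR; move: IH (Fc a).
by set s := (\sum_(i <- r) F i)%R; to_R; lra.
Qed.

Lemma sum_mulr r F c : (\sum_(i <- r) (F i * c))%R = (\sum_(i <- r) F i)%R * c.
Proof. by rewrite -mulr_suml. Qed.

Lemma sum_mull r F c : (\sum_(i <- r) (c * F i))%R = c * (\sum_(i <- r) F i)%R.
Proof. by rewrite -mulr_sumr. Qed.

End RealSums.

Lemma term_le_sum (I : eqType) (r : seq I) (F : I -> R) i :
  (forall i, 0 <= F i) -> i \in r -> F i <= (\sum_(k <- r) F k)%R.
Proof.
move=> F_ge0; elim: r => [|a r IH] //; rewrite in_cons big_cons => /orP [/eqP ->|ir].
  by move: (sum_ge0 r F_ge0); set s := (\sum_(k <- r) F k)%R; to_R; lra.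
by move: (IH ir) (F_ge0 a); set s := (\sum_(k <- r) F k)%R; to_R; lra.
Qed.

Lemma square_ge0 (a : R) : 0 <= (a * a)%R.
Proof. by to_R; nra. Qed.

Lemma size_index_enum_ord n : size (index_enum 'I_n) = n.
Proof. by rewrite /index_enum unlock -enumT size_enum_ord. Qed.

Section Frobenius.
Variables p q : nat.
Implicit Types M N : 'M[R]_(p, q).

Lemma mnorm_ge0 M : 0 <= mnorm M.
Proof. exact: sqrt_pos. Qed.

Lemma abs_entry_le_mnorm M i j : Rabs (M i j) <= mnorm M.
Proof.
rewrite /mnorm -sqrt_Rsqr_abs; apply: sqrt_le_1_alt; rewrite /Rsqr.
apply: Rle_trans (term_le_sum (fun l => square_ge0 (M i l)) (mem_index_enum j)) _.
apply: (term_le_sum (F := fun k => \sum_(l < q) (M k l * M k l))%R) (mem_index_enum i).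
by move=> k; apply: sum_ge0 => l; exact: square_ge0.
Qed.

Definition entry_l1 M : R := (\sum_(i < p) \sum_(j < q) Rabs (M i j))%R.

Lemma entry_l1_ge0 M : 0 <= entry_l1 M.
Proof. by apply: sum_ge0 => i; apply: sum_ge0 => j; exact: Rabs_pos. Qed.

Lemma abs_entry_le_l1 M i j : Rabs (M i j) <= entry_l1 M.
Proof.
apply: Rle_trans (term_le_sum (fun l => Rabs_pos (M i l)) (mem_index_enum j)) _.
apply: (term_le_sum (F := fun k => \sum_(l < q) Rabs (M k l))%R) (mem_index_enum i).
by move=> k; apply: sum_ge0 => l; exact: Rabs_pos.
Qed.

Lemma mnorm_le_l1 M : mnorm M <= entry_l1 M.
Proof.
rewrite /mnorm -(sqrt_square (entry_l1 M)); last exact: entry_l1_ge0.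
apply: sqrt_le_1_alt.
apply: Rle_trans (_ : (\sum_(i < p) \sum_(j < q) (Rabs (M i j) * entry_l1 M))%R <= _).
  apply: sum_le => i; apply: sum_le => j.
  have h1 := abs_entry_le_l1 M i j; have h2 := Rabs_pos (M i j).
  have -> : (M i j * M i j)%R = Rabs (M i j) * Rabs (M i j).
    by rewrite -Rabs_mult Rabs_right //; to_R; nra.
  by to_R; nra.
rewrite /entry_l1 -sum_mulr; apply: Req_le; apply: eq_bigr => i _.
by rewrite sum_mulr.
Qed.

Lemma mnorm_le_entries M c : (forall i j, Rabs (M i j) <= c) -> mnorm M <= INR p * INR q * c.
Proof.
move=> Mc; apply: Rle_trans (mnorm_le_l1 M) _; rewrite /entry_l1 Rmult_assoc.
have := sum_le_const (index_enum 'I_p) (F := fun i => \sum_(j < q) Rabs (M i j))%R (INR q * c).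
rewrite size_index_enum_ord; apply=> i.
by have := sum_le_const (index_enum 'I_q) (F := fun j => Rabs (M i j)) (Mc i); rewrite size_index_enum_ord.
Qed.

Lemma mnorm0 : mnorm (0 : 'M[R]_(p, q))%R = 0.
Proof.
rewrite /mnorm (_ : (\sum_(i < p) \sum_(j < q) _)%R = 0); first exact: sqrt_0.
by rewrite big1 // => i _; rewrite big1 // => j _; rewrite !mxE; to_R; ring.
Qed.

Lemma mnormB M N : mnorm (M - N)%R = mnorm (N - M)%R.
Proof.
rewrite /mnorm; congr sqrt; apply: eq_bigr => i _; apply: eq_bigr => j _.
by rewrite !mxE; to_R; ring.
Qed.

End Frobenius.

Section LinearForms.
Variable d : nat.
Implicit Types (L : 'cV[R]_d -> R) (u v : 'cV[R]_d).

Definition linear_form L := forall a u v, L (a *: u + v)%R = a * L u + L v.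

Lemma linear_form0 L : linear_form L -> L 0%R = 0.
Proof.
move=> hL; have := hL 1 0%R 0%R; rewrite scaler0 addr0 Rmult_1_l => h.
by apply: (Rplus_eq_reg_l (L 0%R)); rewrite Rplus_0_r -h.
Qed.

Lemma linear_formD L u v : linear_form L -> L (u + v)%R = L u + L v.
Proof. by move=> hL; rewrite -{1}(scale1r u) hL; to_R; ring. Qed.

Lemma linear_formZ L a u : linear_form L -> L (a *: u)%R = a * L u.
Proof. by move=> hL; rewrite -(addr0 (a *: u)%R) hL linear_form0 //; to_R; ring. Qed.

Lemma linear_form_sum L (I : Type) (r : seq I) (F : I -> 'cV[R]_d) :
  linear_form L -> L (\sum_(i <- r) F i)%R = (\sum_(i <- r) L (F i))%R.
Proof.
move=> hL; elim: r => [|a r IH]; first by rewrite !big_nil linear_form0.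
by rewrite !big_cons linear_formD // IH.
Qed.

(* Linear forms on a finite-dimensional space are bounded: expand h on the
   canonical basis. *)
Lemma linear_form_bounded L : linear_form L ->
  exists C, 0 <= C /\ forall h, Rabs (L h) <= C * mnorm h.
Proof.
move=> hL; exists (\sum_(i < d) \sum_(j < 1) Rabs (L (delta_mx i j)))%R; split.
  by apply: sum_ge0 => i; apply: sum_ge0 => j; exact: Rabs_pos.
move=> h; rewrite {1}(matrix_sum_delta h) linear_form_sum //.
apply: Rle_trans (abs_sum_le _ _) _.
rewrite Rmult_comm -sum_mull; apply: sum_le => i.
rewrite linear_form_sum //; apply: Rle_trans (abs_sum_le _ _) _.
to_R; rewrite -sum_mull; apply: sum_le => j.
rewrite linear_formZ // Rabs_mult.
have := abs_entry_le_mnorm h i j; have := Rabs_pos (L (delta_mx i j)).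
by to_R; nra.
Qed.

End LinearForms.

Definition dist d (y x : 'cV[R]_d) : R := mnorm (y - x)%R.

Section Neighbourhoods.
Variables (d : nat) (x : 'cV[R]_d).
Implicit Types (P Q : 'cV[R]_d -> Prop) (S T : 'cV[R]_d -> 'cV[R]_d -> Prop).

Lemma dist_ge0 y : 0 <= dist y x.
Proof. exact: mnorm_ge0. Qed.

Lemma dist_self : dist x x = 0.
Proof. by rewrite /dist subrr mnorm0. Qed.

Definition near P := exists r, 0 < r /\ forall y, dist y x < r -> P y.

Definition near2 S := exists r, 0 < r /\ forall y z, dist y x < r -> dist z x < r -> S y z.

Lemma near_and P Q : near P -> near Q -> near (fun y => P y /\ Q y).
Proof.
move=> [r1 [r1_gt0 H1]] [r2 [r2_gt0 H2]]; exists (Rmin r1 r2); split; first exact: Rmin_pos.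
move=> y hy; have := Rmin_l r1 r2; have := Rmin_r r1 r2.
by split; [apply: H1|apply: H2]; lra.
Qed.

Lemma near_mono P Q : (forall y, P y -> Q y) -> near P -> near Q.
Proof. by move=> PQ [r [r_gt0 H]]; exists r; split => // y hy; apply: PQ; exact: H. Qed.

Lemma near_all P : (forall y, P y) -> near P.
Proof. by move=> H; exists 1; split; [lra|move=> y _]. Qed.

Lemma near_center P : near P -> P x.
Proof. by move=> [r [r_gt0 H]]; apply: H; rewrite dist_self. Qed.

Lemma near_forall (I : finType) (P : I -> 'cV[R]_d -> Prop) :
  (forall i, near (P i)) -> near (fun y => forall i, P i y).
Proof.
move=> H; suff: near (fun y => forall i, i \in enum I -> P i y).
  by apply: near_mono => y Hy i; apply: Hy; rewrite mem_enum.
elim: (enum I) => [|a s IH]; first exact: near_all.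
apply: near_mono (near_and (H a) IH) => y [Ha Hs] i.
by rewrite in_cons => /orP [/eqP ->|]; [|exact: Hs].
Qed.

Lemma near_closed_ball P : near P -> exists r, 0 < r /\ forall y, dist y x <= r -> P y.
Proof. by move=> [r [r_gt0 H]]; exists (r / 2); split => [|y hy]; [lra|apply: H; lra]. Qed.

Lemma near2_and S T : near2 S -> near2 T -> near2 (fun y z => S y z /\ T y z).
Proof.
move=> [r1 [r1_gt0 H1]] [r2 [r2_gt0 H2]]; exists (Rmin r1 r2); split; first exact: Rmin_pos.
move=> y z hy hz; have := Rmin_l r1 r2; have := Rmin_r r1 r2.
by split; [apply: H1|apply: H2]; lra.
Qed.

Lemma near2_mono S T : (forall y z, S y z -> T y z) -> near2 S -> near2 T.
Proof. by move=> PQ [r [r_gt0 H]]; exists r; split => // y z hy hz; apply: PQ; exact: H. Qed.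

Lemma near2_all S : (forall y z, S y z) -> near2 S.
Proof. by move=> H; exists 1; split; [lra|move=> y z _]. Qed.

Lemma near2_forall (I : finType) (S : I -> 'cV[R]_d -> 'cV[R]_d -> Prop) :
  (forall i, near2 (S i)) -> near2 (fun y z => forall i, S i y z).
Proof.
move=> H; suff: near2 (fun y z => forall i, i \in enum I -> S i y z).
  by apply: near2_mono => y z Hyz i; apply: Hyz; rewrite mem_enum.
elim: (enum I) => [|a s IH]; first exact: near2_all.
apply: near2_mono (near2_and (H a) IH) => y z [Ha Hs] i.
by rewrite in_cons => /orP [/eqP ->|]; [|exact: Hs].
Qed.

Lemma near2_of_near P : near P -> near2 (fun y z => P y /\ P z).
Proof. by move=> [r [r_gt0 H]]; exists r; split => // y z hy hz; split; exact: H. Qed.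

Lemma near_of_near2 S : near2 S -> near (fun y => S y x).
Proof. by move=> [r [r_gt0 H]]; exists r; split => // y hy; apply: H; rewrite ?dist_self. Qed.

End Neighbourhoods.

Lemma dist_sym d (y x : 'cV[R]_d) : dist y x = dist x y.
Proof. exact: mnormB. Qed.

(* the factorisation behind the estimates for reciprocals *)
Lemma inv_sub (a b : R) : a <> 0 -> b <> 0 -> / a - / b = (a - b) * (/ a * (- / b)).
Proof. by move=> a_neq0 b_neq0; field. Qed.

(** * Landau-type predicates at a point *)

Section Landau.
Variables (d : nat) (x : 'cV[R]_d).
Implicit Types (f g : 'cV[R]_d -> R) (G H : 'cV[R]_d -> 'cV[R]_d -> R).

Definition tends0 f := forall eps, 0 < eps -> near x (fun y => Rabs (f y) < eps).
Definition bounded f := exists M, near x (fun y => Rabs (f y) <= M).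
Definition bigO f := exists C, 0 <= C /\ near x (fun y => Rabs (f y) <= C * dist y x).
Definition littleO f := forall eps, 0 < eps -> near x (fun y => Rabs (f y) <= eps * dist y x).
Definition op_tends0 G :=
  forall eps, 0 < eps -> near x (fun y => forall h, Rabs (G y h) <= eps * mnorm h).

Lemma tends0_le f g : near x (fun y => Rabs (f y) <= Rabs (g y)) -> tends0 g -> tends0 f.
Proof. by move=> fg Hg e e_gt0; apply: near_mono (near_and fg (Hg e e_gt0)) => y []; lra. Qed.

Lemma bounded_le f g : near x (fun y => Rabs (f y) <= Rabs (g y)) -> bounded g -> bounded f.
Proof. by move=> fg [M HM]; exists M; apply: near_mono (near_and fg HM) => y []; lra. Qed.

Lemma bigO_le f g : near x (fun y => Rabs (f y) <= Rabs (g y)) -> bigO g -> bigO f.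
Proof.
by move=> fg [C [C_ge0 HC]]; exists C; split => //; apply: near_mono (near_and fg HC) => y []; lra.
Qed.

Lemma littleO_le f g : near x (fun y => Rabs (f y) <= Rabs (g y)) -> littleO g -> littleO f.
Proof. by move=> fg Hg e e_gt0; apply: near_mono (near_and fg (Hg e e_gt0)) => y []; lra. Qed.

Lemma pointwise_le f g : (forall y, f y = g y) -> near x (fun y => Rabs (f y) <= Rabs (g y)).
Proof. by move=> fg; apply: near_all => y; rewrite fg; lra. Qed.

Lemma op_tends0_eq G H : (forall y h, G y h = H y h) -> op_tends0 H -> op_tends0 G.
Proof. by move=> GH HH e e_gt0; apply: near_mono (HH e e_gt0) => y Hy h; rewrite GH. Qed.

Lemma bounded_pos f : bounded f -> exists M, 0 < M /\ near x (fun y => Rabs (f y) <= M).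
Proof.
move=> [M HM]; exists (Rabs M + 1); split; first by have := Rabs_pos M; lra.
by apply: near_mono HM => y; have := Rle_abs M; lra.
Qed.

Lemma bounded_const c : bounded (fun _ => c).
Proof. by exists (Rabs c); apply: near_all => y; lra. Qed.

Lemma bounded_add f g : bounded f -> bounded g -> bounded (fun y => f y + g y).
Proof.
move=> [M1 H1] [M2 H2]; exists (M1 + M2); apply: near_mono (near_and H1 H2) => y [h1 h2].
by have := Rabs_triang (f y) (g y); lra.
Qed.

Lemma bounded_mul f g : bounded f -> bounded g -> bounded (fun y => f y * g y).
Proof.
move=> /bounded_pos [M1 [M1_gt0 H1]] /bounded_pos [M2 [M2_gt0 H2]]; exists (M1 * M2).
apply: near_mono (near_and H1 H2) => y [h1 h2]; rewrite Rabs_mult.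
by have := Rabs_pos (f y); have := Rabs_pos (g y); nra.
Qed.

Lemma tends0_add f g : tends0 f -> tends0 g -> tends0 (fun y => f y + g y).
Proof.
move=> Hf Hg e e_gt0.
apply: near_mono (near_and (Hf (e/2) ltac:(lra)) (Hg (e/2) ltac:(lra))) => y [h1 h2].
by have := Rabs_triang (f y) (g y); lra.
Qed.

Lemma tends0_bounded f : tends0 f -> bounded f.
Proof. by move=> Hf; exists 1; apply: near_mono (Hf 1 ltac:(lra)) => y; lra. Qed.

Lemma tends0_mul_bounded f g : tends0 f -> bounded g -> tends0 (fun y => f y * g y).
Proof.
move=> Hf /bounded_pos [M [M_gt0 Hg]] e e_gt0.
have eM_gt0 : 0 < e / M by apply: Rdiv_lt_0_compat.
apply: near_mono (near_and (Hf _ eM_gt0) Hg) => y [h1 h2]; rewrite Rabs_mult.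
have -> : e = (e / M) * M by field; lra.
by have := Rabs_pos (f y); have := Rabs_pos (g y); nra.
Qed.

Lemma continuous_away_from0 u : tends0 (fun y => u y - u x) -> u x <> 0 ->
  near x (fun y => Rabs (u x) / 2 <= Rabs (u y)).
Proof.
move=> Hu ux_neq0; have hp : 0 < Rabs (u x) / 2 by have := Rabs_pos_lt _ ux_neq0; lra.
apply: near_mono (Hu _ hp) => y h.
by have := Rabs_triang_inv (u x) (u y); rewrite Rabs_minus_sym; lra.
Qed.

Lemma continuous_neq0 u : tends0 (fun y => u y - u x) -> u x <> 0 -> near x (fun y => u y <> 0).
Proof.
move=> Hu ux_neq0; apply: near_mono (continuous_away_from0 Hu ux_neq0) => y hy uy0.
by rewrite uy0 Rabs_R0 in hy; have := Rabs_pos_lt _ ux_neq0; lra.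
Qed.

Lemma continuous_bounded u : tends0 (fun y => u y - u x) -> bounded u.
Proof.
move=> Hu; apply: bounded_le (_ : bounded (fun y => (u y - u x) + u x)).
  by apply: pointwise_le => y; ring.
by apply: bounded_add; [exact: tends0_bounded|exact: bounded_const].
Qed.

Lemma bounded_inv u : tends0 (fun y => u y - u x) -> u x <> 0 -> bounded (fun y => / u y).
Proof.
move=> Hu ux_neq0; have hp := Rabs_pos_lt _ ux_neq0.
exists (2 / Rabs (u x)); apply: near_mono (continuous_away_from0 Hu ux_neq0) => y h.
have uy_gt0 : 0 < Rabs (u y) by lra.
rewrite Rabs_inv; apply: (Rmult_le_reg_r (Rabs (u y))) => //.
rewrite Rinv_l; last lra.
apply: (Rmult_le_reg_r (Rabs (u x))) => //.
have -> : 2 / Rabs (u x) * Rabs (u y) * Rabs (u x) = 2 * Rabs (u y) by field; lra.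
lra.
Qed.

Lemma continuous_mul u v : tends0 (fun y => u y - u x) -> tends0 (fun y => v y - v x) ->
  tends0 (fun y => u y * v y - u x * v x).
Proof.
move=> Cu Cv; apply: tends0_le (_ : tends0 (fun y => (u y - u x) * v y + (v y - v x) * u x)).
  by apply: pointwise_le => y; ring.
apply: tends0_add; apply: tends0_mul_bounded => //; last exact: bounded_const.
exact: continuous_bounded.
Qed.

Lemma continuous_inv u : tends0 (fun y => u y - u x) -> u x <> 0 ->
  tends0 (fun y => / u y - / u x).
Proof.
move=> Cu ux_neq0.
apply: tends0_le (_ : tends0 (fun y => (u y - u x) * (/ u y * (- / u x)))).
  by apply: near_mono (continuous_neq0 Cu ux_neq0) => y hy; rewrite inv_sub //; lra.
apply: tends0_mul_bounded => //.
by apply: bounded_mul; [exact: bounded_inv|exact: bounded_const].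
Qed.

Lemma bigO_add f g : bigO f -> bigO g -> bigO (fun y => f y + g y).
Proof.
move=> [C1 [C1_ge0 H1]] [C2 [C2_ge0 H2]]; exists (C1 + C2); split; first lra.
apply: near_mono (near_and H1 H2) => y [h1 h2].
by have := Rabs_triang (f y) (g y); lra.
Qed.

Lemma bigO_mul_bounded f g : bigO f -> bounded g -> bigO (fun y => f y * g y).
Proof.
move=> [C [C_ge0 Hf]] /bounded_pos [M [M_gt0 Hg]]; exists (C * M); split; first nra.
apply: near_mono (near_and Hf Hg) => y [h1 h2]; rewrite Rabs_mult.
by have := Rabs_pos (f y); have := Rabs_pos (g y); have := dist_ge0 x y; nra.
Qed.

Lemma bigO_tends0 f : bigO f -> tends0 f.
Proof.
move=> [C [C_ge0 [r [r_gt0 Hf]]]] e e_gt0.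
have eC_gt0 : 0 < e / (C + 1) by apply: Rdiv_lt_0_compat; lra.
exists (Rmin r (e / (C + 1))); split; first exact: Rmin_pos.
move=> y hy; have := Rmin_l r (e / (C + 1)); have := Rmin_r r (e / (C + 1)) => h1 h2.
have h3 := Hf y ltac:(lra); have h4 := dist_ge0 x y.
have h5 : (C + 1) * (e / (C + 1)) = e by field; lra.
have h6 : C * dist y x <= C * (e / (C + 1)) by apply: Rmult_le_compat_l => //; lra.
lra.
Qed.

Lemma bigO_linear_form L : linear_form L -> bigO (fun y => L (y - x)%R).
Proof.
move=> /linear_form_bounded [C [C_ge0 HC]]; exists C; split => //.
by apply: near_all => y; exact: HC.
Qed.

Lemma littleO_add f g : littleO f -> littleO g -> littleO (fun y => f y + g y).
Proof.
move=> Hf Hg e e_gt0.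
apply: near_mono (near_and (Hf (e/2) ltac:(lra)) (Hg (e/2) ltac:(lra))) => y [h1 h2].
by have := Rabs_triang (f y) (g y); lra.
Qed.

Lemma littleO_mul_bounded f g : littleO f -> bounded g -> littleO (fun y => f y * g y).
Proof.
move=> Hf /bounded_pos [M [M_gt0 Hg]] e e_gt0.
have eM_gt0 : 0 < e / M by apply: Rdiv_lt_0_compat.
apply: near_mono (near_and (Hf _ eM_gt0) Hg) => y [h1 h2]; rewrite Rabs_mult.
have h5 : e / M * M = e by field; lra.
by have := Rabs_pos (f y); have := Rabs_pos (g y); have := dist_ge0 x y; nra.
Qed.

Lemma littleO_bigO f : littleO f -> bigO f.
Proof. by move=> Hf; exists 1; split; [lra|exact: (Hf 1 Rlt_0_1)]. Qed.

Lemma bigO_mul_tends0 f g : bigO f -> tends0 g -> littleO (fun y => f y * g y).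
Proof.
move=> [C [C_ge0 Hf]] Hg e e_gt0.
have eC_gt0 : 0 < e / (C + 1) by apply: Rdiv_lt_0_compat; lra.
apply: near_mono (near_and Hf (Hg _ eC_gt0)) => y [h1 h2]; rewrite Rabs_mult.
have h5 : (C + 1) * (e / (C + 1)) = e by field; lra.
by have := Rabs_pos (f y); have := Rabs_pos (g y); have := dist_ge0 x y; nra.
Qed.

Lemma op_tends0_add G H : op_tends0 G -> op_tends0 H -> op_tends0 (fun y h => G y h + H y h).
Proof.
move=> HG HH e e_gt0.
apply: near_mono (near_and (HG (e/2) ltac:(lra)) (HH (e/2) ltac:(lra))) => y [h1 h2] h.
by have := h1 h; have := h2 h; have := Rabs_triang (G y h) (H y h); lra.
Qed.

Lemma op_tends0_mul_bounded G g : op_tends0 G -> bounded g -> op_tends0 (fun y h => g y * G y h).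
Proof.
move=> HG /bounded_pos [M [M_gt0 Hg]] e e_gt0.
have eM_gt0 : 0 < e / M by apply: Rdiv_lt_0_compat.
apply: near_mono (near_and (HG _ eM_gt0) Hg) => y [h1 h2] h; rewrite Rabs_mult.
have h5 : e / M * M = e by field; lra.
by have := h1 h; have := Rabs_pos (g y); have := Rabs_pos (G y h); have := mnorm_ge0 h; nra.
Qed.

Lemma op_tends0_scale g L : tends0 g -> linear_form L -> op_tends0 (fun y h => g y * L h).
Proof.
move=> Hg /linear_form_bounded [C [C_ge0 HC]] e e_gt0.
have eC_gt0 : 0 < e / (C + 1) by apply: Rdiv_lt_0_compat; lra.
apply: near_mono (Hg _ eC_gt0) => y h1 h; rewrite Rabs_mult.
have h5 : (C + 1) * (e / (C + 1)) = e by field; lra.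
by have := HC h; have := Rabs_pos (g y); have := Rabs_pos (L h); have := mnorm_ge0 h; nra.
Qed.

End Landau.

(** * Scalar functions of class C^b at a point *)

Definition has_sderiv d (u : 'cV[R]_d -> R) (x : 'cV[R]_d) (L : 'cV[R]_d -> R) :=
  linear_form L /\ littleO x (fun y => u y - u x - L (y - x)%R).

Definition sregular (b : reg_class) d (u : 'cV[R]_d -> R) (x0 : 'cV[R]_d) : Prop :=
  match b with
  | Reg0 => tends0 x0 (fun x => u x - u x0)
  | RegLp => bigO x0 (fun x => u x - u x0)
  | RegL => exists L, 0 <= L /\ near2 x0 (fun x y => Rabs (u x - u y) <= L * dist x y)
  | Reg1p => exists L, has_sderiv u x0 L
  | Reg1 => exists Du, near x0 (fun x => has_sderiv u x (Du x)) /\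
                       op_tends0 x0 (fun x h => Du x h - Du x0 h)
  end.

Section ScalarDerivative.
Variables (d : nat) (x : 'cV[R]_d).
Implicit Types (u v : 'cV[R]_d -> R) (L Lu Lv : 'cV[R]_d -> R).

Lemma has_sderiv_bigO u L : has_sderiv u x L -> bigO x (fun y => u y - u x).
Proof.
move=> [hL Hu]; apply: bigO_le (_ : bigO x (fun y => (u y - u x - L (y - x)%R) + L (y - x)%R)).
  by apply: pointwise_le => y; ring.
by apply: bigO_add; [exact: littleO_bigO|exact: bigO_linear_form].
Qed.

Lemma has_sderiv_const c : has_sderiv (fun _ => c) x (fun _ => 0).
Proof.
split; first by move=> a u v; ring.
move=> e e_gt0; apply: near_all => y; rewrite (_ : c - c - 0 = 0); last ring.
by rewrite Rabs_R0; have := dist_ge0 x y; nra.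
Qed.

Lemma has_sderiv_add u v Lu Lv : has_sderiv u x Lu -> has_sderiv v x Lv ->
  has_sderiv (fun y => u y + v y) x (fun h => Lu h + Lv h).
Proof.
move=> [hu Hu] [hv Hv]; split; first by move=> a p q; rewrite hu hv; ring.
apply: littleO_le (littleO_add Hu Hv); apply: pointwise_le => y; ring.
Qed.

Lemma has_sderiv_mul u v Lu Lv : has_sderiv u x Lu -> has_sderiv v x Lv ->
  has_sderiv (fun y => u y * v y) x (fun h => u x * Lv h + v x * Lu h).
Proof.
move=> DU DV; have Bu := has_sderiv_bigO DU; have Bv := has_sderiv_bigO DV.
move: DU DV => [hu Hu] [hv Hv]; split; first by move=> a p q; rewrite hu hv; ring.
apply: littleO_le (_ : littleO x (fun y => ((v y - v x - Lv (y - x)%R) * u x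
   + (u y - u x - Lu (y - x)%R) * v x) + (u y - u x) * (v y - v x))).
  by apply: pointwise_le => y; ring.
apply: littleO_add; last exact: bigO_mul_tends0 Bu (bigO_tends0 Bv).
by apply: littleO_add; apply: littleO_mul_bounded => //; exact: bounded_const.
Qed.

Lemma has_sderiv_inv u Lu : has_sderiv u x Lu -> u x <> 0 ->
  has_sderiv (fun y => / u y) x (fun h => - Lu h * / (u x * u x)).
Proof.
move=> DU ux_neq0; have Cu := bigO_tends0 (has_sderiv_bigO DU).
move: DU => [hu Hu]; split; first by move=> a p q; rewrite hu; ring.
apply: littleO_le (_ : littleO x (fun y => ((u y - u x - Lu (y - x)%R) * (- u x)
    + Lu (y - x)%R * (u y - u x)) * (/ (u x * u x) * / u y))).
  apply: near_mono (continuous_neq0 Cu ux_neq0) => y uy_neq0.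
  by apply: Req_le; congr Rabs; field; split.
apply: littleO_mul_bounded; last by apply: bounded_mul; [exact: bounded_const|exact: bounded_inv].
apply: littleO_add; first by apply: littleO_mul_bounded => //; exact: bounded_const.
exact: bigO_mul_tends0 (bigO_linear_form x hu) Cu.
Qed.

End ScalarDerivative.

Lemma abs_mul_sub_le (a a' b b' La Lb Ma Mb t : R) :
  Rabs (a - a') <= La * t -> Rabs (b - b') <= Lb * t -> Rabs b <= Mb -> Rabs a' <= Ma ->
  0 <= La -> 0 <= Lb -> 0 <= t ->
  Rabs (a * b - a' * b') <= (La * Mb + Ma * Lb) * t.
Proof.
move=> h1 h2 h3 h4 La_ge0 Lb_ge0 t_ge0.
rewrite (_ : a * b - a' * b' = (a - a') * b + a' * (b - b')); last ring.
apply: Rle_trans (Rabs_triang _ _) _; rewrite !Rabs_mult.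
have e1 : Rabs (a - a') * Rabs b <= (La * t) * Mb by apply: Rmult_le_compat => //; exact: Rabs_pos.
have e2 : Rabs a' * Rabs (b - b') <= Ma * (Lb * t) by apply: Rmult_le_compat => //; exact: Rabs_pos.
lra.
Qed.

Lemma abs_inv_sub_le (a a' L m t : R) :
  Rabs (a - a') <= L * t -> m <= Rabs a -> m <= Rabs a' -> 0 < m -> 0 <= L -> 0 <= t ->
  Rabs (/ a - / a') <= (L / (m * m)) * t.
Proof.
move=> h1 h2 h3 m_gt0 L_ge0 t_ge0.
have a_neq0 : a <> 0 by move=> e; rewrite e Rabs_R0 in h2; lra.
have a'_neq0 : a' <> 0 by move=> e; rewrite e Rabs_R0 in h3; lra.
rewrite (_ : / a - / a' = (a' - a) * / (a * a')); last by field.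
rewrite Rabs_mult Rabs_minus_sym Rabs_inv Rabs_mult.
have hmm : m * m <= Rabs a * Rabs a' by apply: Rmult_le_compat; lra.
have aa'_gt0 : 0 < Rabs a * Rabs a' by nra.
apply: (Rmult_le_reg_r (Rabs a * Rabs a')) => //.
rewrite Rmult_assoc Rinv_l; last lra.
have -> : L / (m * m) * t * (Rabs a * Rabs a') = (L * t) * ((Rabs a * Rabs a') / (m * m)).
  by field; lra.
have : 1 <= Rabs a * Rabs a' / (m * m).
  apply: (Rmult_le_reg_r (m * m)); first nra.
  by rewrite Rmult_1_l /Rdiv Rmult_assoc Rinv_l ?Rmult_1_r; nra.
by have := Rabs_pos (a - a'); nra.
Qed.

Section ScalarRegularity.
Variables (b : reg_class) (d : nat) (x0 : 'cV[R]_d).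
Implicit Types (u v : 'cV[R]_d -> R).

Lemma sregular_continuous u : sregular b u x0 -> tends0 x0 (fun x => u x - u x0).
Proof.
case: b => /=.
- done.
- exact: bigO_tends0.
- move=> [L [L_ge0 H]]; apply: bigO_tends0; exists L; split => //.
  by apply: near_mono (near_of_near2 H) => y; rewrite dist_sym.
- by move=> [L H]; apply: bigO_tends0; exact: has_sderiv_bigO H.
- by move=> [Du [H _]]; apply: bigO_tends0; exact: has_sderiv_bigO (near_center H).
Qed.

Lemma sregular_const c : sregular b (fun _ => c) x0.
Proof.
case: b => /=.
- by move=> e e_gt0; apply: near_all => y; rewrite Rminus_diag Rabs_R0.
- exists 0; split; [lra|]; apply: near_all => y; rewrite Rminus_diag Rabs_R0; lra.
- exists 0; split; [lra|]; apply: near2_all => y z; rewrite Rminus_diag Rabs_R0; lra.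
- by exists (fun _ => 0); exact: has_sderiv_const.
- exists (fun _ _ => 0); split; first by apply: near_all => y; exact: has_sderiv_const.
  move=> e e_gt0; apply: near_all => y h; rewrite Rminus_diag Rabs_R0.
  by have := mnorm_ge0 h; nra.
Qed.

Lemma sregular_add u v : sregular b u x0 -> sregular b v x0 -> sregular b (fun x => u x + v x) x0.
Proof.
have split_diff x y : u x + v x - (u y + v y) = (u x - u y) + (v x - v y) by ring.
case: b => /=.
- move=> Hu Hv; apply: tends0_le (tends0_add Hu Hv).
  by apply: pointwise_le => y; rewrite split_diff.
- move=> Hu Hv; apply: bigO_le (bigO_add Hu Hv).
  by apply: pointwise_le => y; rewrite split_diff.
- move=> [L1 [L1_ge0 H1]] [L2 [L2_ge0 H2]]; exists (L1 + L2); split; first lra.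
  apply: near2_mono (near2_and H1 H2) => y z [h1 h2]; rewrite split_diff.
  by have := Rabs_triang (u y - u z) (v y - v z); lra.
- by move=> [L1 H1] [L2 H2]; eexists; exact: has_sderiv_add H1 H2.
- move=> [D1 [H1 C1]] [D2 [H2 C2]]; exists (fun x h => D1 x h + D2 x h); split.
    by apply: near_mono (near_and H1 H2) => y [h1 h2]; exact: has_sderiv_add.
  by apply: op_tends0_eq (op_tends0_add C1 C2) => y h; ring.
Qed.

Lemma sregular1_mul u v Du Dv :
  near x0 (fun x => has_sderiv u x (Du x)) -> op_tends0 x0 (fun x h => Du x h - Du x0 h) ->
  near x0 (fun x => has_sderiv v x (Dv x)) -> op_tends0 x0 (fun x h => Dv x h - Dv x0 h) ->
  tends0 x0 (fun x => u x - u x0) -> tends0 x0 (fun x => v x - v x0) ->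
  op_tends0 x0 (fun x h => (u x * Dv x h + v x * Du x h) - (u x0 * Dv x0 h + v x0 * Du x0 h)).
Proof.
move=> H1 C1 H2 C2 Cu Cv.
have [lin_u _] := near_center H1; have [lin_v _] := near_center H2.
apply: op_tends0_eq (_ : op_tends0 x0 (fun x h =>
    (u x * (Dv x h - Dv x0 h) + (u x - u x0) * Dv x0 h)
  + (v x * (Du x h - Du x0 h) + (v x - v x0) * Du x0 h))).
  by move=> y h; ring.
apply: op_tends0_add; apply: op_tends0_add.
- exact: (op_tends0_mul_bounded C2 (continuous_bounded Cu)).
- exact: (op_tends0_scale Cu lin_v).
- exact: (op_tends0_mul_bounded C1 (continuous_bounded Cv)).
- exact: (op_tends0_scale Cv lin_u).
Qed.

Lemma sregular_mul u v : sregular b u x0 -> sregular b v x0 -> sregular b (fun x => u x * v x) x0.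
Proof.
move=> Ru Rv; have Cu := sregular_continuous Ru; have Cv := sregular_continuous Rv.
have Bu := continuous_bounded Cu; have Bv := continuous_bounded Cv.
have split_diff x : u x * v x - u x0 * v x0 = (u x - u x0) * v x + (v x - v x0) * u x0.
  by ring.
move: Ru Rv; case: b => /=.
- by move=> _ _; exact: continuous_mul.
- move=> Hu Hv; apply: bigO_le (_ : bigO x0 (fun x => (u x - u x0) * v x + (v x - v x0) * u x0)).
    by apply: pointwise_le => y; rewrite split_diff.
  by apply: bigO_add; apply: bigO_mul_bounded => //; exact: bounded_const.
- move=> [L1 [L1_ge0 H1]] [L2 [L2_ge0 H2]].
  move: Bu Bv => /bounded_pos [Mu [Mu_gt0 Bu]] /bounded_pos [Mv [Mv_gt0 Bv]].
  exists (L1 * Mv + Mu * L2); split; first nra.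
  apply: near2_mono (near2_and (near2_and H1 H2) (near2_and (near2_of_near Bu) (near2_of_near Bv))).
  move=> y z [[h1 h2] [[_ h4] [h5 _]]].
  by apply: abs_mul_sub_le => //; exact: dist_ge0.
- by move=> [L1 H1] [L2 H2]; eexists; exact: has_sderiv_mul H1 H2.
- move=> [D1 [H1 C1]] [D2 [H2 C2]]; exists (fun x h => u x * D2 x h + v x * D1 x h); split.
    by apply: near_mono (near_and H1 H2) => y [h1 h2]; exact: has_sderiv_mul.
  exact: sregular1_mul.
Qed.

Lemma sregular1_inv u Du :
  near x0 (fun x => has_sderiv u x (Du x)) -> op_tends0 x0 (fun x h => Du x h - Du x0 h) ->
  tends0 x0 (fun x => u x - u x0) -> u x0 <> 0 ->
  op_tends0 x0 (fun x h => - Du x h * / (u x * u x) - - Du x0 h * / (u x0 * u x0)).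
Proof.
move=> H1 C1 Cu ux0_neq0; have [lin_u _] := near_center H1.
have Cw : tends0 x0 (fun x => / (u x * u x) - / (u x0 * u x0)).
  by apply: continuous_inv; [exact: continuous_mul|exact: Rmult_integral_contrapositive].
apply: op_tends0_eq (_ : op_tends0 x0 (fun x h => (- / (u x * u x)) * (Du x h - Du x0 h)
     + (- (/ (u x * u x) - / (u x0 * u x0))) * Du x0 h)).
  by move=> y h; ring.
apply: op_tends0_add; last first.
  apply: op_tends0_scale lin_u; apply: tends0_le Cw.
  by apply: near_all => y; rewrite Rabs_Ropp; lra.
apply: op_tends0_mul_bounded => //.
apply: bounded_le (_ : bounded x0 (fun x => / u x * / u x * (-1))).
  apply: near_mono (continuous_neq0 Cu ux0_neq0) => y uy_neq0.
  by rewrite Rinv_mult; apply: Req_le; congr Rabs; ring.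
by apply: bounded_mul; [apply: bounded_mul; exact: bounded_inv|exact: bounded_const].
Qed.

Lemma sregular_inv u : sregular b u x0 -> u x0 <> 0 -> sregular b (fun x => / u x) x0.
Proof.
move=> Ru ux0_neq0; have Cu := sregular_continuous Ru.
move: Ru; case: b => /=.
- by move=> _; exact: continuous_inv.
- move=> Hu; apply: bigO_le (_ : bigO x0 (fun x => (u x - u x0) * (/ u x * (- / u x0)))).
    by apply: near_mono (continuous_neq0 Cu ux0_neq0) => y hy; rewrite inv_sub //; lra.
  by apply: bigO_mul_bounded => //; apply: bounded_mul; [exact: bounded_inv|exact: bounded_const].
- move=> [L [L_ge0 H]]; set m := Rabs (u x0) / 2.
  have m_gt0 : 0 < m by have := Rabs_pos_lt _ ux0_neq0; rewrite /m; lra.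
  exists (L / (m * m)); split.
    by apply: Rmult_le_pos => //; apply: Rlt_le; apply: Rinv_0_lt_compat; nra.
  apply: near2_mono (near2_and H (near2_of_near (continuous_away_from0 Cu ux0_neq0))).
  by move=> y z [h1 [h2 h3]]; apply: abs_inv_sub_le => //; exact: dist_ge0.
- by move=> [L H]; eexists; exact: (has_sderiv_inv H ux0_neq0).
- move=> [D [H1 C1]]; exists (fun x h => - D x h * / (u x * u x)); split.
    apply: near_mono (near_and H1 (continuous_neq0 Cu ux0_neq0)) => y [h1 h2].
    exact: has_sderiv_inv.
  exact: sregular1_inv.
Qed.

Lemma sregular_ext u v : (forall x, u x = v x) -> sregular b v x0 -> sregular b u x0.
Proof. by move=> uv; rewrite (functional_extensionality u v uv). Qed.

Lemma sregular_sum (I : Type) (r : seq I) (F : I -> 'cV[R]_d -> R) :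
  (forall i, sregular b (F i) x0) -> sregular b (fun x => (\sum_(i <- r) F i x)%R) x0.
Proof.
move=> H; elim: r => [|a r IH].
  by apply: (sregular_ext (v := fun _ => 0)) => [x|]; [rewrite big_nil|exact: sregular_const].
apply: (sregular_ext (v := fun x => F a x + (\sum_(i <- r) F i x)%R)).
  by move=> x; rewrite big_cons.
exact: sregular_add.
Qed.

Lemma sregular_prod (I : Type) (r : seq I) (F : I -> 'cV[R]_d -> R) :
  (forall i, sregular b (F i) x0) -> sregular b (fun x => (\prod_(i <- r) F i x)%R) x0.
Proof.
move=> H; elim: r => [|a r IH].
  by apply: (sregular_ext (v := fun _ => 1)) => [x|]; [rewrite big_nil|exact: sregular_const].
apply: (sregular_ext (v := fun x => F a x * (\prod_(i <- r) F i x)%R)).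
  by move=> x; rewrite big_cons.
exact: sregular_mul.
Qed.

Lemma sregular_exp u k : sregular b u x0 -> sregular b (fun x => (u x ^+ k)%R) x0.
Proof.
move=> Ru; elim: k => [|k IH].
  by apply: (sregular_ext (v := fun _ => 1)) => [x|]; [rewrite expr0|exact: sregular_const].
apply: (sregular_ext (v := fun x => u x * (u x ^+ k)%R)); first by move=> x; rewrite exprS.
exact: sregular_mul.
Qed.

End ScalarRegularity.

(** * Matrix functions: regularity is entrywise *)

Lemma uniform_constant (I : finType) (P : I -> R -> Prop) :
  (forall i C C', P i C -> C <= C' -> P i C') -> (forall i, exists C, P i C) ->
  exists C, 0 <= C /\ forall i, P i C.
Proof.
move=> P_up HP; pose Ci i := proj1_sig (constructive_indefinite_description _ (HP i)).
have PCi i : P i (Ci i) := proj2_sig (constructive_indefinite_description _ (HP i)).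
exists (\sum_(i : I) Rabs (Ci i))%R; split; first by apply: sum_ge0 => i; exact: Rabs_pos.
move=> i; apply: P_up (PCi i) _; apply: Rle_trans (Rle_abs _) _.
by apply: (term_le_sum (F := fun i => Rabs (Ci i))) (mem_index_enum i) => k; exact: Rabs_pos.
Qed.

Lemma shrink_eps p q eps : 0 < eps ->
  exists eps', 0 < eps' /\ INR p * INR q * eps' < eps.
Proof.
move=> eps_gt0; have K_ge0 : 0 <= INR p * INR q by apply: Rmult_le_pos; exact: pos_INR.
exists (eps / (INR p * INR q + 1)); split; first by apply: Rdiv_lt_0_compat; lra.
have -> : INR p * INR q * (eps / (INR p * INR q + 1))
          = eps - eps / (INR p * INR q + 1) by field; lra.
suff : 0 < eps / (INR p * INR q + 1) by lra.
by apply: Rdiv_lt_0_compat; lra.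
Qed.

Lemma abs_entry_sub_le p q (M N : 'M[R]_(p, q)) i j : Rabs (M i j - N i j) <= mnorm (M - N)%R.
Proof. by have := abs_entry_le_mnorm (M - N)%R i j; rewrite !mxE. Qed.

Definition mregular b d p q (F : 'cV[R]_d -> 'M[R]_(p, q)) (x0 : 'cV[R]_d) :=
  forall i j, sregular b (fun x => F x i j) x0.

Section MatrixRegularity.
Variables (b : reg_class) (d : nat) (x0 : 'cV[R]_d).

Lemma mregular_const p q (M : 'M[R]_(p, q)) : mregular b (fun _ => M) x0.
Proof. by move=> i j; exact: sregular_const. Qed.

Lemma mregular_add p q (F G : 'cV[R]_d -> 'M[R]_(p, q)) :
  mregular b F x0 -> mregular b G x0 -> mregular b (fun x => F x + G x)%R x0.
Proof.
move=> RF RG i j; apply: (sregular_ext (v := fun x => F x i j + G x i j)).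
  by move=> x; rewrite mxE.
exact: sregular_add.
Qed.

Lemma mregular_scale p q (s : 'cV[R]_d -> R) (F : 'cV[R]_d -> 'M[R]_(p, q)) :
  sregular b s x0 -> mregular b F x0 -> mregular b (fun x => s x *: F x)%R x0.
Proof.
move=> Rs RF i j; apply: (sregular_ext (v := fun x => s x * F x i j)).
  by move=> x; rewrite mxE.
exact: sregular_mul.
Qed.

Lemma mregular_mul p q r (F : 'cV[R]_d -> 'M[R]_(p, q)) (G : 'cV[R]_d -> 'M[R]_(q, r)) :
  mregular b F x0 -> mregular b G x0 -> mregular b (fun x => F x *m G x)%R x0.
Proof.
move=> RF RG i j; apply: (sregular_ext (v := fun x => \sum_k (F x i k * G x k j))%R).
  by move=> x; rewrite mxE.
by apply: sregular_sum => k; exact: sregular_mul.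
Qed.

Lemma mregular_tr p q (F : 'cV[R]_d -> 'M[R]_(p, q)) :
  mregular b F x0 -> mregular b (fun x => (F x)^T)%R x0.
Proof.
move=> RF i j; apply: (sregular_ext (v := fun x => F x j i)); first by move=> x; rewrite mxE.
exact: RF.
Qed.

(* The determinant is a polynomial in the entries (Leibniz formula). *)
Lemma sregular_det n (F : 'cV[R]_d -> 'M[R]_n) :
  mregular b F x0 -> sregular b (fun x => \det (F x))%R x0.
Proof.
move=> RF; apply: sregular_sum => s.
by apply: sregular_mul; [exact: sregular_const|apply: sregular_prod => i; exact: RF].
Qed.

(* The adjugate consists of signed minors. *)
Lemma mregular_adj n (F : 'cV[R]_d -> 'M[R]_n) :
  mregular b F x0 -> mregular b (fun x => \adj (F x))%R x0.
Proof.
move=> RF i j; apply: (sregular_ext (v := fun x => cofactor (F x) j i)).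
  by move=> x; rewrite mxE.
apply: sregular_mul; first exact: sregular_const.
apply: sregular_det => k l.
apply: (sregular_ext (v := fun x => F x (lift j k) (lift i l))); first by move=> x; rewrite !mxE.
exact: RF.
Qed.

End MatrixRegularity.

Section EntrywiseBridge.
Variables (d p q : nat).
Implicit Types (F : 'cV[R]_d -> 'M[R]_(p, q)) (x : 'cV[R]_d).

Lemma has_sderiv_entries F x D :
  frechet_at F x D -> forall i j, has_sderiv (fun y => F y i j) x (fun h => D h i j).
Proof.
move=> [linD HD] i j; split; first by move=> a u v; rewrite linD !mxE.
move=> e e_gt0; have [r [r_gt0 Hr]] := HD e e_gt0; exists r; split => // y hy.
by apply: Rle_trans (Hr y hy); have := abs_entry_le_mnorm (F y - F x - D (y - x))%R i j; rewrite !mxE.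
Qed.

Lemma frechet_of_entries F x L :
  (forall i j, has_sderiv (fun y => F y i j) x (L i j)) ->
  frechet_at F x (fun h => \matrix_(i, j) L i j h)%R.
Proof.
move=> HL; split.
  move=> a u v; apply/matrixP => i j; rewrite !mxE.
  by have [linL _] := HL i j; rewrite linL.
move=> e e_gt0; have [e' [e'_gt0 e'_small]] := shrink_eps p q e_gt0.
have [r [r_gt0 Hr]] := near_forall (fun i => near_forall (fun j => (proj2 (HL i j)) _ e'_gt0)).
exists r; split => // y hy.
apply: Rle_trans (mnorm_le_entries (c := e' * mnorm (y - x)%R) _) _.
  by move=> i j; have := Hr y hy i j; rewrite !mxE.
by have := mnorm_ge0 (y - x)%R; nra.
Qed.

Lemma regular_mregular b F x0 : regular b F x0 -> mregular b F x0.
Proof.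
case: b => /= H i j.
- move=> e e_gt0; have [r [r_gt0 Hr]] := H e e_gt0; exists r; split => // y hy.
  exact: Rle_lt_trans (abs_entry_sub_le _ _ i j) (Hr y hy).
- have [r [L [r_gt0 [L_ge0 Hr]]]] := H; exists L; split => //; exists r; split => // y hy.
  by apply: Rle_trans (abs_entry_sub_le _ _ i j) (Hr y _); rewrite /dist in hy; lra.
- have [r [L [r_gt0 [L_ge0 Hr]]]] := H; exists L; split => //; exists r; split => // y z hy hz.
  exact: Rle_trans (abs_entry_sub_le _ _ i j) (Hr y z hy hz).
- by have [D HD] := H; exists (fun h => D h i j); exact: has_sderiv_entries.
- have [r [Df [r_gt0 [H1 H2]]]] := H; exists (fun x h => Df x h i j); split.
    by exists r; split => // y hy; exact: has_sderiv_entries (H1 y hy) i j.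
  move=> e e_gt0; have [r' [r'_gt0 Hr']] := H2 e e_gt0; exists r'; split => // y hy h.
  exact: Rle_trans (abs_entry_sub_le _ _ i j) (Hr' y hy h).
Qed.

(* Conversely, finitely many entrywise estimates assemble into a matrix one,
   with uniform constants (the norm is at most p q times the largest entry). *)
Lemma mregular_regular b F x0 : mregular b F x0 -> regular b F x0.
Proof.
have pq_ge0 : 0 <= INR p * INR q by apply: Rmult_le_pos; exact: pos_INR.
case: b => H /=.
- move=> e e_gt0; have [e' [e'_gt0 e'_small]] := shrink_eps p q e_gt0.
  have [r [r_gt0 Hr]] := near_forall (fun i => near_forall (fun j => H i j _ e'_gt0)).
  exists r; split => // y hy; apply: Rle_lt_trans e'_small.
  by apply: mnorm_le_entries => i j; have := Hr y hy i j; rewrite !mxE; to_R; lra.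
- have [C [C_ge0 HC]] := uniform_constant
    (P := fun ij C => near x0 (fun y => Rabs (F y ij.1 ij.2 - F x0 ij.1 ij.2) <= C * dist y x0))
    ltac:(move=> ij C C' HC CC'; apply: near_mono HC => y hy; have := dist_ge0 x0 y; nra)
    ltac:(move=> [i j]; have [C [_ HC]] := H i j; by exists C).
  have [r [r_gt0 Hr]] := near_closed_ball (near_forall HC).
  exists r, (INR p * INR q * C); split => //; split; first exact: Rmult_le_pos.
  move=> y hy; rewrite Rmult_assoc; apply: mnorm_le_entries => i j.
  by have := Hr y hy (i, j); rewrite !mxE.
- have [C [C_ge0 HC]] := uniform_constant
    (P := fun ij C => near2 x0 (fun y z => Rabs (F y ij.1 ij.2 - F z ij.1 ij.2) <= C * dist y z))
    ltac:(move=> ij C C' HC CC'; apply: near2_mono HC => y z hyz; have := dist_ge0 z y; nra)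
    ltac:(move=> [i j]; have [C [_ HC]] := H i j; by exists C).
  have [r [r_gt0 Hr]] := near2_forall HC.
  exists r, (INR p * INR q * C); split => //; split; first exact: Rmult_le_pos.
  move=> y z hy hz; rewrite Rmult_assoc; apply: mnorm_le_entries => i j.
  by have := Hr y z hy hz (i, j); rewrite !mxE.
- pose L i j := proj1_sig (constructive_indefinite_description _ (H i j)).
  exists (fun h => \matrix_(i, j) L i j h)%R; apply: frechet_of_entries => i j.
  exact: proj2_sig (constructive_indefinite_description _ (H i j)).
- pose Du i j := proj1_sig (constructive_indefinite_description _ (H i j)).
  have HDu i j := proj2_sig (constructive_indefinite_description _ (H i j)).
  have [r [r_gt0 Hr]] := near_forall (fun i => near_forall (fun j => proj1 (HDu i j))).
  exists r, (fun x h => \matrix_(i, j) Du i j x h)%R; split => //; split.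
    by move=> y hy; apply: frechet_of_entries => i j; exact: Hr y hy i j.
  move=> e e_gt0; have [e' [e'_gt0 e'_small]] := shrink_eps p q e_gt0.
  have [r' [r'_gt0 Hr']] := near_forall (fun i => near_forall (fun j => proj2 (HDu i j) _ e'_gt0)).
  exists r'; split => // y hy h.
  apply: Rle_trans (mnorm_le_entries (c := e' * mnorm h) _) _.
    by move=> i j; have := Hr' y hy i j h; rewrite !mxE.
  by have := mnorm_ge0 h; nra.
Qed.

End EntrywiseBridge.

(** * Gram matrices *)

Definition sqnorm k (w : 'rV[R]_k) : R := (\sum_(i < k) w ord0 i * w ord0 i)%R.

Lemma sqnorm_ge0 k (w : 'rV[R]_k) : 0 <= sqnorm w.
Proof. by apply: sum_ge0 => i; exact: square_ge0. Qed.

Lemma sqnorm_gt0 k (w : 'rV[R]_k) : w != 0%R -> 0 < sqnorm w.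
Proof.
move=> w_neq0; case: (classic (exists i, w ord0 i <> 0)) => [[i wi_neq0]|w_eq0].
  have wi2_gt0 : 0 < w ord0 i * w ord0 i by nra.
  apply: Rlt_le_trans wi2_gt0 _.
  exact: (term_le_sum (F := fun l => (w ord0 l * w ord0 l)%R) (fun l => square_ge0 _) (mem_index_enum i)).
exfalso; move/negP: w_neq0; apply; apply/eqP/matrixP => i j; rewrite (ord1 i) mxE.
by apply: NNPP => wj_neq0; apply: w_eq0; exists j.
Qed.

Lemma mul_tr_sqnorm k (w : 'rV[R]_k) : (w *m w^T)%R ord0 ord0 = sqnorm w.
Proof. by rewrite mxE; apply: eq_bigr => i _; rewrite mxE. Qed.

Lemma shifted_gram_quadratic m n (a : 'M[R]_(m, n)) t c (v : 'rV[R]_m) :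
  (v *m (t *: (a *m a^T) + c%:M) *m v^T)%R ord0 ord0 = t * sqnorm (v *m a)%R + c * sqnorm v.
Proof.
rewrite mulmxDr mulmxDl -scalemxAr mul_mx_scalar -!scalemxAl.
rewrite (_ : v *m (a *m a^T) *m v^T = (v *m a) *m (v *m a)^T)%R; last by rewrite trmx_mul !mulmxA.
by rewrite -(mul_tr_sqnorm (v *m a)%R) -(mul_tr_sqnorm v) !mxE.
Qed.

(* t (a a^T) + c I is positive definite for t >= 0 and c > 0, hence invertible. *)
Lemma det_shifted_gram_neq0 m n (a : 'M[R]_(m, n)) t c : 0 <= t -> 0 < c ->
  (\det (t *: (a *m a^T) + c%:M))%R <> 0.
Proof.
move=> t_ge0 c_gt0 /eqP /det0P [v v_neq0 v_ker].
have quad0 : t * sqnorm (v *m a)%R + c * sqnorm v = 0.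
  by rewrite -shifted_gram_quadratic v_ker mul0mx mxE.
have := Rmult_le_pos _ _ t_ge0 (sqnorm_ge0 (v *m a)%R).
have := Rmult_lt_0_compat _ _ c_gt0 (sqnorm_gt0 v_neq0).
lra.
Qed.

Lemma continuity_ext (f g : R -> R) : (forall s, f s = g s) -> continuity g -> continuity f.
Proof. by move=> fg; rewrite (functional_extensionality f g fg). Qed.

Lemma continuity_sum (I : Type) (r : seq I) (F : I -> R -> R) :
  (forall i, continuity (F i)) -> continuity (fun s => (\sum_(i <- r) F i s)%R).
Proof.
move=> H; elim: r => [|a r IH].
  apply: (continuity_ext (g := fun _ => 0)) => [s|]; first by rewrite big_nil.
  exact: continuity_const.
apply: (continuity_ext (g := fun s => F a s + (\sum_(i <- r) F i s)%R)).
  by move=> s; rewrite big_cons.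
exact: continuity_plus.
Qed.

Lemma continuity_prod (I : Type) (r : seq I) (F : I -> R -> R) :
  (forall i, continuity (F i)) -> continuity (fun s => (\prod_(i <- r) F i s)%R).
Proof.
move=> H; elim: r => [|a r IH].
  apply: (continuity_ext (g := fun _ => 1)) => [s|]; first by rewrite big_nil.
  exact: continuity_const.
apply: (continuity_ext (g := fun s => F a s * (\prod_(i <- r) F i s)%R)).
  by move=> s; rewrite big_cons.
exact: continuity_mult.
Qed.

Lemma continuity_det k (F : R -> 'M[R]_k) :
  (forall i j, continuity (fun s => F s i j)) -> continuity (fun s => \det (F s))%R.
Proof.
move=> H; apply: continuity_sum => s.
apply: continuity_mult; first exact: continuity_const.
by apply: continuity_prod => i; exact: H.
Qed.

Lemma continuity_det_pencil k (S T : 'M[R]_k) : continuity (fun s => \det (s *: T + S))%R.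
Proof.
apply: continuity_det => i j.
apply: (continuity_ext (g := fun s => s * T i j + S i j)); first by move=> s; rewrite !mxE.
apply: continuity_plus; last exact: continuity_const.
by apply: continuity_mult; [exact: derivable_continuous derivable_id|exact: continuity_const].
Qed.

Lemma pow_gt0 (t : R) k : 0 < t -> 0 < (t ^+ k)%R.
Proof.
move=> t_gt0; elim: k => [|k IH]; first by rewrite expr0; to_R; lra.
by rewrite exprS; exact: Rmult_lt_0_compat.
Qed.

Lemma pow_ge0 (t : R) k : 0 <= t -> 0 <= (t ^+ k)%R.
Proof.
move=> t_ge0; elim: k => [|k IH]; first by rewrite expr0; to_R; lra.
by rewrite exprS; exact: Rmult_le_pos.
Qed.

(* det (s a a^T + I) > 0 for s >= 0: it equals 1 at s = 0 and, by the
   intermediate value theorem, never vanishes on [0, s]. *)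
Lemma det_shifted_gram_gt0 m n (a : 'M[R]_(m, n)) s : 0 <= s ->
  0 < (\det (s *: (a *m a^T) + 1%:M))%R.
Proof.
set psi := fun s => (\det (s *: (a *m a^T) + 1%:M))%R.
have psi0 : psi 0 = 1 by rewrite /psi scale0r add0r det1.
have psi_neq0 s' : 0 <= s' -> psi s' <> 0.
  by move=> s'_ge0; apply: det_shifted_gram_neq0 => //; to_R; lra.
move=> s_ge0; case: (Rtotal_order (psi s) 0) => [psi_lt0|[psi_eq0|//]]; last first.
  by exfalso; exact: psi_neq0 psi_eq0.
have s_gt0 : 0 < s.
  by case: (Rle_lt_or_eq_dec _ _ s_ge0) => // s0; rewrite -s0 psi0 in psi_lt0; lra.
have [z [[z_ge0 _] psi_z]] := IVT (fun s => - psi s) 0 s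
  (continuity_opp _ (@continuity_det_pencil _ 1%:M (a *m a^T)%R)) s_gt0
  ltac:(rewrite /= psi0; lra) ltac:(rewrite /=; lra).
by exfalso; apply: (psi_neq0 z z_ge0); lra.
Qed.

(* Gram determinants are nonnegative: det (a a^T + t I) = t^m det (a a^T / t + I)
   is positive for t > 0, and det (a a^T + t I) is continuous in t. *)
Lemma det_gram_ge0 m n (a : 'M[R]_(m, n)) : 0 <= (\det (a *m a^T))%R.
Proof.
set S := (a *m a^T)%R.
pose phi t := (\det (t *: 1%:M + S))%R.
have phi_pos t : 0 < t -> 0 < phi t.
  move=> t_gt0.
  have -> : phi t = (t ^+ m * \det (/ t *: S + 1%:M))%R.
    rewrite /phi -detZ scalerDr scalerA addrC.
    by rewrite (_ : (t * / t)%R = 1%R) ?scale1r //; to_R; field; lra.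
  apply: Rmult_lt_0_compat; first exact: pow_gt0.
  by apply: det_shifted_gram_gt0; apply: Rlt_le; exact: Rinv_0_lt_compat.
have phi0 : phi 0 = (\det S)%R by rewrite /phi scale0r add0r.
rewrite -phi0; case: (Rle_or_lt 0 (phi 0)) => // phi0_lt0.
have [r [r_gt0 Hr]] := @continuity_det_pencil _ S 1%:M 0 (- phi 0) ltac:(lra).
have r2_in : D_x no_cond 0 (r / 2) /\ Rdist (r / 2) 0 < r.
  split; first by split => //; apply: Rlt_not_eq; lra.
  by rewrite /Rdist Rminus_0_r Rabs_right; lra.
have := Hr (r / 2) r2_in; rewrite /= /Rdist -/(phi _) -/(phi 0).
have := phi_pos (r / 2) ltac:(lra); have := Rle_abs (phi (r / 2) - phi 0); lra.
Qed.

(** * A closed formula for the damped pseudoinverse *)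

Section ClosedFormula.
Variables (m n : nat) (mu : R) (nu : nat).
Implicit Types a : 'M[R]_(m, n).

Definition damping_det a : R := ((\det (a *m a^T)) ^+ nu)%R.

Definition damping_mx a : 'M[R]_m := (damping_det a *: (a *m a^T) + (mu * mu)%:M)%R.

Definition damped_pinv_formula a : 'M[R]_(n, m) :=
  (damping_det a *: (a^T *m ((\det (damping_mx a))^-1 *: \adj (damping_mx a))))%R.

(* D >= 0 since a Gram determinant is, and therefore det M <> 0. *)
Lemma damping_det_ge0 a : 0 <= damping_det a.
Proof. by apply: pow_ge0; exact: det_gram_ge0. Qed.

Lemma det_damping_mx_neq0 a : 0 < mu -> (\det (damping_mx a))%R <> 0.
Proof.
move=> mu_gt0; apply: det_shifted_gram_neq0; first exact: damping_det_ge0.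
by to_R; nra.
Qed.

End ClosedFormula.

Lemma unitmx_of_det k (N : 'M[R]_k) : (\det N)%R <> 0 -> N \in unitmx.
Proof. by move=> detN_neq0; rewrite unitmxE unitfE; apply/eqP. Qed.

(* The pseudoinverse of an invertible matrix is its inverse: the inverse
   satisfies the Penrose equations, and any solution X of the first one
   (N X N = N) is the inverse. *)
Lemma pinv_invmx k (N : 'M[R]_k) : N \in unitmx -> pinv N = invmx N.
Proof.
move=> N_unit.
have P : penrose N (invmx N).
  by split; rewrite ?mulmxV ?mulVmx ?mul1mx ?trmx1.
rewrite /pinv; have [NXN _ _ _] := epsilon_spec (inhabits 0%R) (penrose N) (ex_intro _ _ P).
set X := epsilon _ _ in NXN *.
have : (invmx N *m (N *m X *m N) *m invmx N = invmx N *m N *m invmx N)%R by rewrite NXN.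
by rewrite !mulmxA mulVmx // mul1mx -!mulmxA mulmxV // mulmx1 mul1mx.
Qed.

(* For D > 0: (a a^T + (mu^2 / D) I)^+ = D M^{-1}; for D = 0 both sides are 0. *)
Lemma damped_pinv_closed_form d m n (A : 'cV[R]_d -> 'M[R]_(m, n)) mu nu x : 0 < mu ->
  damped_pinv (A x) (lam_fun mu nu A x) = damped_pinv_formula mu nu (A x).
Proof.
move=> mu_gt0; rewrite /lam_fun -/(damping_det nu (A x)); move: (A x) => a.
have D_ge0 := damping_det_ge0 nu a.
case: Rlt_dec => D_gt0 /=; last first.
  have D0 : damping_det nu a = 0 by case: (Rle_lt_or_eq_dec _ _ D_ge0).
  by rewrite /damped_pinv_formula D0 scale0r.
set D := damping_det nu a in D_ge0 D_gt0 *.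
have lam2_ge0 : 0 <= mu * mu / D by apply: Rlt_le; apply: Rdiv_lt_0_compat => //; nra.
rewrite sqrt_sqrt //.
set N := (a *m a^T + (mu * mu / D)%:M)%R.
have N_unit : N \in unitmx.
  apply: unitmx_of_det; rewrite /N -[(a *m a^T)%R]scale1r.
  by apply: det_shifted_gram_neq0; to_R; [lra|apply: Rdiv_lt_0_compat => //; nra].
have M_eq : damping_mx mu nu a = (D *: N)%R.
  rewrite /damping_mx /N scalerDr scale_scalar_mx; congr (_ + _)%R; congr (_%:M)%R.
  by to_R; field; lra.
have M_unit := unitmx_of_det (det_damping_mx_neq0 (nu := nu) (a := a) mu_gt0).
rewrite pinv_invmx // /damped_pinv_formula.
have -> : ((\det (damping_mx mu nu a))^-1 *: \adj (damping_mx mu nu a))%R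
          = invmx (damping_mx mu nu a) by rewrite /invmx M_unit.
rewrite M_eq invmxZ; last by rewrite -M_eq.
rewrite -scalemxAr scalerA (_ : (D * D^-1)%R = 1%R) ?scale1r //.
by to_R; field; lra.
Qed.

Theorem lemma8 (b : reg_class) (d m n : nat) (x0 : 'cV[R]_d)
  (A : 'cV[R]_d -> 'M[R]_(m, n)) (mu : R) (nu : nat) :
  regular b A x0 -> Rlt 0 mu ->
  regular b (fun x => damped_pinv (A x) (lam_fun mu nu A x)) x0.
Proof.
move=> RA mu_gt0.
have -> : (fun x => damped_pinv (A x) (lam_fun mu nu A x))
          = (fun x => damped_pinv_formula mu nu (A x)).
  by apply: functional_extensionality => x; exact: damped_pinv_closed_form.
apply: mregular_regular.
have MA := regular_mregular RA.
have Mgram : mregular b (fun x => A x *m (A x)^T)%R x0 := mregular_mul MA (mregular_tr MA).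
have SD : sregular b (fun x => damping_det nu (A x)) x0 := sregular_exp nu (sregular_det Mgram).
have MM : mregular b (fun x => damping_mx mu nu (A x)) x0.
  by apply: mregular_add; [exact: mregular_scale SD Mgram|exact: mregular_const].
rewrite /damped_pinv_formula; apply: (mregular_scale SD); apply: (mregular_mul (mregular_tr MA)).
apply: mregular_scale (mregular_adj MM).
exact: (sregular_inv (sregular_det MM) (det_damping_mx_neq0 (nu := nu) (a := A x0) mu_gt0)).
Qed.
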